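(* Let $\mathbf{x}$ be an infinite word satisfying $r(i,\mathbf{x})\le 2i+1$ for all $i\ge1$. Let $m,n$ be positive integers with $r(n,\mathbf{x})=2n+1$ and $m\ge 2n+1$. If $k$ is the integer with $r(k-1,\mathbf{x})<m\le r(k,\mathbf{x})$, then $k\ge n$ and $r(k,\mathbf{x})-k\le m-n$.
   Context: For $\mathbf{x}=x_1x_2\ldots$, $x_i^j=x_i\cdots x_j$ (empty if $j<i$) and for $n\ge0$, $r(n,\mathbf{x})=\min\{m\ge1:\ x_i^{i+n-1}=x_{m-n+1}^{m}\text{ for some } 1\le i\le m-n\}$ (so $r(0,\mathbf{x})=1$); $n\mapsto r(n,\mathbf{x})$ is strictly increasing. *)

From mathcomp Require Import all_boot.
From Stdlib Require Import ClassicalEpsilon.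
Set Implicit Arguments. Unset Strict Implicit. Unset Printing Implicit Defensive.

(* An infinite word x = x_1 x_2 ... over a finite alphabet A is a function
   x : nat -> A, where x i is the letter x_i (i >= 1); the value x 0 is unused. *)

(* rprop x n m  <=>  m >= 1 and x_i^{i+n-1} = x_{m-n+1}^m for some 1 <= i <= m-n. *)
Definition rprop (A : finType) (x : nat -> A) (n m : nat) : bool :=
  (0 < m) &&
  [exists i : 'I_(m - n).+1,
      (0 < (i : nat)) && [forall j : 'I_n, x (i + j) == x (m - n + 1 + j)]].

(* r(n,x) = min { m >= 1 : rprop x n m }.  Over a finite alphabet this set is
   always nonempty (pigeonhole); the default 0 is never used. *)
Definition r (A : finType) (n : nat) (x : nat -> A) : nat :=
  match excluded_middle_informative (exists m, rprop x n m) with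
  | left H => ex_minn H
  | right _ => 0
  end.

(* Dropping the last letter of a repeated block of length n+1 ending at m
   yields a repeated block of length n ending at m-1, so r(n) < r(n+1); hence
   r(j) >= r(i) + (j - i) for i <= j.  If k < n this bound from k to n would
   force r(k) <= n + k + 1 < m.  If k > n, the bound from n to k-1 gives
   m > r(k-1) >= n + k, i.e. k + 1 <= m - n, while r(k) - k <= k + 1 by
   hypothesis; the case k = n is the same with m >= 2n + 1. *)
From mathcomp Require Import all_boot zify.
From Stdlib Require Import ClassicalEpsilon.
Set Implicit Arguments. Unset Strict Implicit.

Section RepetitionFunction.
Variables (A : finType) (x : nat -> A).

Lemma r_gt0P n : reflect (exists m, rprop x n m) (0 < r n x).
Proof.
apply: (iffP idP); rewrite /r; case: excluded_middle_informative => // ex _.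
by case: ex_minnP => m /andP[].
Qed.

Lemma rprop_r n : 0 < r n x -> rprop x n (r n x).
Proof. by rewrite /r; case: excluded_middle_informative => // ex _; case: ex_minnP. Qed.

Lemma r_min n m : rprop x n m -> r n x <= m.
Proof.
move=> rnm; rewrite /r; case: excluded_middle_informative => [ex|[]]; last by exists m.
by case: ex_minnP => m' _; apply.
Qed.

Lemma rpropS n m : rprop x n.+1 m -> rprop x n m.-1.
Proof.
case/andP=> _ /existsP[i /andP[i_gt0 /forallP eq_blocks]].
have lt_i : (i : nat) < (m.-1 - n).+1 by have := ltn_ord i; lia.
apply/andP; split; first by have := ltn_ord i; lia.
apply/existsP; exists (Ordinal lt_i); rewrite /= i_gt0 /=.
apply/forallP => j; have /eqP -> := eq_blocks (widen_ord (leqnSn n) j).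
by have -> : m - n.+1 + 1 + j = m.-1 - n + 1 + j by have := ltn_ord i; lia.
Qed.

Lemma r_ltS n : 0 < r n.+1 x -> 0 < r n x < r n.+1 x.
Proof.
move=> rS_gt0; have prS := rprop_r rS_gt0.
have pr := rpropS prS.
have r_gt0 : 0 < r n x by apply/r_gt0P; exists (r n.+1 x).-1.
by rewrite r_gt0 /=; have := r_min pr; case/andP: pr; lia.
Qed.

Lemma r_addn_le i j : i <= j -> 0 < r j x -> r i x + (j - i) <= r j x.
Proof.
move=> le_ij; have [d ->] : exists d, j = i + d by exists (j - i); rewrite subnKC.
rewrite addKn; elim: d => [|d IHd]; first by rewrite !addn0.
by rewrite addnS => /r_ltS /andP[/IHd]; lia.
Qed.

End RepetitionFunction.

Theorem lemma5p6 (A : finType) (x : nat -> A) (m n k : nat) :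
  (forall i, 1 <= i -> r i x <= 2 * i + 1) ->
  0 < m -> 0 < n ->
  r n x = 2 * n + 1 ->
  2 * n + 1 <= m ->
  r k.-1 x < m <= r k x ->
  n <= k /\ r k x - k <= m - n.
Proof.
move=> r_le m_gt0 n_gt0 r_n le_m /andP[lt_m le_mk].
have le_nk : n <= k.
  have [//|lt_kn] := leqP n k.
  have := r_addn_le (x := x) (ltnW lt_kn); rewrite r_n; lia.
split=> //; have := r_le k (leq_trans n_gt0 le_nk).
have [lt_nk|] := ltnP n k; last lia.
have rpred_gt0 : 0 < r k.-1 x.
  by have /r_ltS/andP[] : 0 < r k.-1.+1 x by rewrite prednK; lia.
have le_n_pred : n <= k.-1 by lia.
have := r_addn_le le_n_pred rpred_gt0; lia.
Qed.
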